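(* Let $N\ge 2$ be an integer and $b_1,\dots,b_N\in\{0,1\}$ with $b_N=1$, and suppose $b:=\sum_{j=1}^N b_j2^{-j}$ satisfies $2^N b>1$ ($2^Nb$ is then an odd integer). Let $P_b(x)=x^N-\sum_{j=1}^N b_jx^{N-j}$. Then $P_b$ has a real root, and its largest real root $s_b$ (the silver number of index $b$) satisfies $1<s_b<2$. *)

From HB Require Import structures.
From mathcomp Require Import all_boot all_order all_algebra.
From mathcomp Require Import all_reals.
Set Implicit Arguments. Unset Strict Implicit. Unset Printing Implicit Defensive.
Import Order.TTheory GRing.Theory Num.Theory.

(* Digits b_1,...,b_N are given by b : nat -> bool, only indices 1..N matter. *)

(* 2^N * b = \sum_{j=1}^N b_j 2^(N-j)  (a natural number) *)
Definition scaled_b (N : nat) (b : nat -> bool) : nat :=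
  \sum_(1 <= j < N.+1) (b j) * 2 ^ (N - j).

Local Open Scope ring_scope.

Definition Pb (R : nzRingType) (N : nat) (b : nat -> bool) : {poly R} :=
  'X^N - \sum_(1 <= j < N.+1) (b j)%:R *: 'X^(N - j).

From HB Require Import structures.
From mathcomp Require Import all_boot all_order all_algebra.
From mathcomp Require Import all_reals.
From mathcomp Require Import polyrcf lra zify.
Set Implicit Arguments. Unset Strict Implicit. Unset Printing Implicit Defensive.
Import Order.TTheory GRing.Theory Num.Theory.
Local Open Scope ring_scope.

(* P_b(1) = 1 - #{j | b_j = 1} is negative because 2^N b > 1 forces at least
   two nonzero digits, while P_b(x) > 0 for x >= 2 because
   \sum_(j < N) x^j < x^N there.  The intermediate value theorem gives a
   root in (1, 2), and a nonzero real polynomial has finitely many roots, so it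
   has a largest one, which then lies in (1, 2) as well. *)

Lemma exists_max_root (R : rcfType) (p : {poly R}) (r0 : R) :
  p != 0 -> root p r0 ->
  exists2 s, root p s & forall x, root p x -> x <= s.
Proof.
move=> p_neq0 pr0; have roots_p := roots_on_rootsR p_neq0.
exists (\big[Num.max/r0]_(x <- rootsR p) x).
  rewrite big_seq; apply: (big_ind (root p)) => // [x y px py|x].
    by rewrite maxElt; case: ifP.
  by rewrite -roots_p => /andP[].
by move=> x px; apply: le_bigmax_seq; rewrite // -roots_p px.
Qed.

Lemma horner_Pb (R : comNzRingType) N b (x : R) :
  (Pb R N b).[x] = x ^+ N - \sum_(1 <= j < N.+1) (b j)%:R * x ^+ (N - j).
Proof.
rewrite /Pb hornerD hornerN horner_sum hornerXn; congr (_ - _).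
by apply: eq_bigr => j _; rewrite hornerZ hornerXn.
Qed.

Lemma Pb_at1 (R : comNzRingType) N b :
  (Pb R N b).[1] = 1 - (\sum_(1 <= j < N.+1) (b j : nat))%:R.
Proof.
rewrite horner_Pb expr1n natr_sum; congr (_ - _).
by apply: eq_bigr => j _; rewrite expr1n mulr1.
Qed.

Lemma sum_expr_lt (R : realFieldType) N (x : R) : 2 <= x ->
  \sum_(i < N) x ^+ i < x ^+ N.
Proof.
move=> x_ge2; have := subrX1 x N; set S := \sum_(i < N) _ => XN1.
have S_ge0 : 0 <= S by apply: sumr_ge0 => i _; apply: exprn_ge0; lra.
have : S <= (x - 1) * S by rewrite ler_peMl //; lra.
lra.
Qed.

Lemma Pb_gt0 (R : realFieldType) N b (x : R) : 2 <= x -> 0 < (Pb R N b).[x].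
Proof.
move=> x_ge2; rewrite horner_Pb subr_gt0; apply: le_lt_trans (sum_expr_lt N x_ge2).
rewrite big_nat_rev /= big_add1 /= big_mkord; apply: ler_sum => i _.
have -> : (N - (N.+1 - i.+1))%N = i by rewrite subSS; have := ltn_ord i; lia.
by case: (b _); rewrite ?mul1r ?mul0r // exprn_ge0 //; lra.
Qed.

Lemma two_le_count_digits N (b : nat -> bool) :
  (1 <= N)%N -> b N -> (1 < scaled_b N b)%N ->
  (2 <= \sum_(1 <= j < N.+1) (b j : nat))%N.
Proof.
move=> N_ge1 bN; rewrite /scaled_b !big_nat_recr //= bN subnn expn0.
set s1 := (\sum_(1 <= i < N) _)%N; set s2 := (\sum_(1 <= i < N) _)%N.
have : (s1 <= s2 * 2 ^ N)%N.
  rewrite /s1 /s2 big_distrl /=; apply: leq_sum => j _.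
  by rewrite leq_mul2l leq_pexp2l ?leq_subr ?orbT.
by case: s2 => [|k]; rewrite ?mul0n ?leqn0; [move/eqP->|]; lia.
Qed.

Theorem mainTheorem4 (R : realType) (N : nat) (b : nat -> bool) :
  (2 <= N)%N -> b N = true -> (1 < scaled_b N b)%N ->
  exists s : R,
    [/\ root (Pb R N b) s,
        (forall x : R, root (Pb R N b) x -> x <= s)
      & 1 < s < 2].
Proof.
move=> N_ge2 bN scaled_gt1; set p := Pb R N b.
have p1_lt0 : p.[1] < 0.
  rewrite /p Pb_at1 subr_lt0 -[1]/(1%:R) ltr_nat.
  by apply: two_le_count_digits; rewrite // ltnW.
have p_ge2_gt0 x : 2 <= x -> 0 < p.[x] by exact: Pb_gt0.
have p2_gt0 := p_ge2_gt0 2 (lexx _).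
have p_neq0 : p != 0 by apply: contraTneq p2_gt0 => ->; rewrite horner0 ltxx.
have sign_change : p.[1] <= 0 <= p.[2] by rewrite (ltW p1_lt0) (ltW p2_gt0).
have [r0 /andP[r0_ge1 _] pr0] := poly_ivt (ler1n R 2) sign_change.
have [s ps s_max] := exists_max_root p_neq0 pr0.
have s_ge1 := le_trans r0_ge1 (s_max _ pr0).
exists s; split => //; apply/andP; split.
  by rewrite lt_neqAle s_ge1 andbT; apply: contraTneq ps => <-; rewrite /root lt_eqF.
by rewrite ltNge; apply: contraTN ps => /p_ge2_gt0 /gt_eqF; rewrite /root => ->.
Qed.
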